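(* Let $A$ be a nonempty finite set with $|A|=n$ and $\Sigma\in\mathbb{R}$. Define $\varphi$ on metrics $d$ on $A$ by $\varphi(d)(x,y)=d(x,\cdot)+d(y,\cdot)-d(x,y)-d(\cdot,\cdot)+\Sigma/n$, and $\psi$ on $\Sigma$-proximities $\sigma$ on $A$ by $\psi(\sigma)(x,y)=\tfrac12(\sigma(x,x)+\sigma(y,y))-\sigma(x,y)$. Then $\psi(\varphi(d))=d$ for every metric $d$ on $A$, and $\varphi(\psi(\sigma))=\sigma$ for every $\Sigma$-proximity $\sigma$ on $A$.
   Context: A metric on $A$ is a function $d:A^2\to\mathbb{R}$ such that for all $x,y,z\in A$: $d(x,y)=0$ iff $x=y$, and $d(x,y)+d(x,z)-d(y,z)\ge 0$. Notation: $d(x,\cdot)=\frac1n\sum_{t\in A}d(x,t)$, $d(\cdot,\cdot)=\frac1{n^2}\sum_{s,t\in A}d(s,t)$ (and likewise for any function on $A^2$). A function $\sigma:A^2\to\mathbb{R}$ is a $\Sigma$-proximity on $A$ if for all $x,y,z\in A$: (1) $\sum_{t\in A}\sigma(x,t)=\Sigma$; (2) $\sigma(x,y)+\sigma(x,z)-\sigma(y,z)\le\sigma(x,x)$, with strict inequality whenever $z=y$ and $x\ne y$. *)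

From mathcomp Require Import all_boot all_order all_algebra.
Set Implicit Arguments. Unset Strict Implicit. Unset Printing Implicit Defensive.
Import Order.TTheory GRing.Theory Num.Theory.
Local Open Scope ring_scope.

Section Defs.
Variables (R : realFieldType) (A : finType).

Definition is_metric (d : A -> A -> R) : Prop :=
  (forall x y, d x y = 0 <-> x = y) /\
  (forall x y z, 0 <= d x y + d x z - d y z).

Definition is_proximity (Sig : R) (s : A -> A -> R) : Prop :=
  (forall x, \sum_(t : A) s x t = Sig) /\
  (forall x y z, s x y + s x z - s y z <= s x x) /\
  (forall x y, x != y -> s x y + s x y - s y y < s x x).

(* d(x,.) and d(.,.) averages, n = #|A| *)
Definition avg1 (d : A -> A -> R) (x : A) : R := (\sum_(t : A) d x t) / #|A|%:R.
Definition avg2 (d : A -> A -> R) : R := (\sum_(s : A) \sum_(t : A) d s t) / (#|A|%:R ^+ 2).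

Definition phi (Sig : R) (d : A -> A -> R) : A -> A -> R :=
  fun x y => avg1 d x + avg1 d y - d x y - avg2 d + Sig / #|A|%:R.

Definition psi (s : A -> A -> R) : A -> A -> R :=
  fun x y => (s x x + s y y) / 2 - s x y.
End Defs.

From mathcomp Require Import all_boot all_order all_algebra.
From mathcomp Require Import reals.
From mathcomp Require Import ring.
Import Order.TTheory GRing.Theory Num.Theory.
Local Open Scope ring_scope.

(* In psi (phi d) all the
   averages and Sig/n cancel, leaving d(x,y) - (d(x,x) + d(y,y))/2.
   Conversely, with tr the diagonal sum of s, the row sums of psi s are
   (n s(x,x) + tr)/2 - Sig, so its averages are explicit and phi (psi s)
   collapses to s. *)

Section PhiPsi.
Variables (R : realFieldType) (A : finType).
Implicit Types (d s : A -> A -> R) (Sig : R).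

Lemma metric_diag0 d : is_metric d -> forall z, d z z = 0.
Proof. by case=> hd _ z; apply/hd. Qed.

Lemma psi_phi Sig d : (forall z, d z z = 0) ->
  forall x y, psi (phi Sig d) x y = d x y.
Proof.
move=> d0 x y; rewrite /psi /phi !d0.
(* Abstracting Sig/n spares field the side condition n != 0. *)
by move: (avg1 d x) (avg1 d y) (avg2 d) (Sig / _) => a b c e; field.
Qed.

Section RowSums.
Variables (Sig : R) (s : A -> A -> R).
Hypothesis row_sum : forall x, \sum_(t : A) s x t = Sig.

Lemma sum_psi_row x :
  \sum_(t : A) psi s x t = (s x x *+ #|A| + \sum_(t : A) s t t) / 2 - Sig.
Proof.
by rewrite /psi sumrB row_sum -mulr_suml big_split /= sumr_const.
Qed.

Lemma sum_psi :
  \sum_(x : A) \sum_(t : A) psi s x t =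
    ((\sum_(t : A) s t t) *+ #|A| *+ 2) / 2 - Sig *+ #|A|.
Proof.
under eq_bigr => x _ do rewrite sum_psi_row.
by rewrite sumrB sumr_const -mulr_suml big_split /= sumr_const sumrMnl mulr2n.
Qed.

Lemma phi_psi : (0 < #|A|)%N -> forall x y, phi Sig (psi s) x y = s x y.
Proof.
move=> A_gt0 x y; have n_neq0 : (#|A|%:R : R) != 0 by rewrite pnatr_eq0 -lt0n.
rewrite /phi /avg1 /avg2 sum_psi !sum_psi_row {1}/psi.
by field.
Qed.

End RowSums.
End PhiPsi.

Theorem lemma1 (R : realType) (A : finType) (Sig : R) :
  (0 < #|A|)%N ->
  (forall d : A -> A -> R, is_metric d ->
     forall x y, psi (phi Sig d) x y = d x y) /\
  (forall s : A -> A -> R, is_proximity Sig s ->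
     forall x y, phi Sig (psi s) x y = s x y).
Proof.
move=> A_gt0; split=> [d /metric_diag0 d0 | s [row_sum _]].
  exact: psi_phi.
exact: phi_psi.
Qed.
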